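(* Let $C$ be a unital countably quantifier-free saturated C*-algebra and $B$ a separable C*-subalgebra of $C$. If $\Phi\colon B\to C$ is an approximately inner injective *-homomorphism, then there is a unitary $u\in C$ with $\Phi(b)=ubu^*$ for all $b\in B$.
   Context: $\Phi\colon B\to C$ is approximately inner if for every $\varepsilon>0$ and every finite $F\subseteq B$ there is a unitary $u\in C$ with $\|\Phi(a)-uau^*\|<\varepsilon$ for all $a\in F$. For $F\subseteq\mathbb R$, $\varepsilon>0$, $F_\varepsilon=\{x:\operatorname{dist}(x,F)\le\varepsilon\}$. $C$ is countably quantifier-free saturated if for every sequence $P_n(\bar x)$ of *-polynomials with coefficients in $C$ in variables $x_k$ ($k\in\mathbb N$) and compact $K_n\subseteq\mathbb R$, the following are equivalent: (i) there are $b_k$ in the unit ball of $C$ with $\|P_n(\bar b)\|\in K_n$ for all $n$; (ii) for every $m$ there are $b_k$ in the unit ball with $\|P_n(\bar b)\|\in(K_n)_{1/m}$ for all $n\le m$. *)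

From Stdlib Require Import Reals Lra List.
From Stdlib Require Import Rtopology.
Open Scope R_scope.

Record Cpx := mkC { cre : R; cim : R }.
Definition C0 : Cpx := mkC 0 0.
Definition C1 : Cpx := mkC 1 0.
Definition Cadd (a b : Cpx) : Cpx := mkC (cre a + cre b) (cim a + cim b).
Definition Cmul (a b : Cpx) : Cpx :=
  mkC (cre a * cre b - cim a * cim b) (cre a * cim b + cim a * cre b).
Definition Cconj (a : Cpx) : Cpx := mkC (cre a) (- cim a).
Definition Cabs (a : Cpx) : R := sqrt (cre a * cre a + cim a * cim a).

Record CstarAlgebra := {
  car :> Type;
  zero : car;
  add : car -> car -> car;
  opp : car -> car;
  mul : car -> car -> car;
  scal : Cpx -> car -> car;
  star : car -> car;
  norm : car -> R;
  add_assoc : forall x y z, add x (add y z) = add (add x y) z;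
  add_comm : forall x y, add x y = add y x;
  add_zero : forall x, add x zero = x;
  add_opp : forall x, add x (opp x) = zero;
  scal_one : forall x, scal C1 x = x;
  scal_assoc : forall a b x, scal a (scal b x) = scal (Cmul a b) x;
  scal_addr : forall a x y, scal a (add x y) = add (scal a x) (scal a y);
  scal_addl : forall a b x, scal (Cadd a b) x = add (scal a x) (scal b x);
  mul_assoc : forall x y z, mul x (mul y z) = mul (mul x y) z;
  mul_addr : forall x y z, mul x (add y z) = add (mul x y) (mul x z);
  mul_addl : forall x y z, mul (add x y) z = add (mul x z) (mul y z);
  mul_scall : forall a x y, mul (scal a x) y = scal a (mul x y);
  mul_scalr : forall a x y, mul x (scal a y) = scal a (mul x y);
  star_invol : forall x, star (star x) = x;
  star_add : forall x y, star (add x y) = add (star x) (star y);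
  star_scal : forall a x, star (scal a x) = scal (Cconj a) (star x);
  star_mul : forall x y, star (mul x y) = mul (star y) (star x);
  norm_eq0 : forall x, norm x = 0 -> x = zero;
  norm_triangle : forall x y, norm (add x y) <= norm x + norm y;
  norm_scal : forall a x, norm (scal a x) = Cabs a * norm x;
  norm_mul : forall x y, norm (mul x y) <= norm x * norm y;
  norm_cstar : forall x, norm (mul (star x) x) = norm x * norm x;
  complete : forall u : nat -> car,
    (forall eps, eps > 0 -> exists N, forall n m, (n >= N)%nat -> (m >= N)%nat ->
       norm (add (u n) (opp (u m))) < eps) ->
    exists l, forall eps, eps > 0 -> exists N, forall n, (n >= N)%nat ->
       norm (add (u n) (opp l)) < eps
}.

Arguments zero {c}. Arguments add {c}. Arguments opp {c}. Arguments mul {c}.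
Arguments scal {c}. Arguments star {c}. Arguments norm {c}.

Definition sub {A : CstarAlgebra} (x y : A) : A := add x (opp y).

Definition is_unit {A : CstarAlgebra} (e : A) : Prop :=
  forall x, mul e x = x /\ mul x e = x.

Definition unital (A : CstarAlgebra) : Prop := exists e : A, is_unit e.

Definition unitary {A : CstarAlgebra} (e u : A) : Prop :=
  mul (star u) u = e /\ mul u (star u) = e.

Definition converges_to {A : CstarAlgebra} (u : nat -> A) (l : A) : Prop :=
  forall eps, eps > 0 -> exists N, forall n, (n >= N)%nat -> norm (sub (u n) l) < eps.

Definition cstar_subalgebra {A : CstarAlgebra} (S : A -> Prop) : Prop :=
  S zero /\
  (forall x y, S x -> S y -> S (add x y)) /\
  (forall a x, S x -> S (scal a x)) /\
  (forall x y, S x -> S y -> S (mul x y)) /\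
  (forall x, S x -> S (star x)) /\
  (forall (u : nat -> A) l, (forall n, S (u n)) -> converges_to u l -> S l).

Definition separable_set {A : CstarAlgebra} (S : A -> Prop) : Prop :=
  exists d : nat -> A, (forall n, S (d n)) /\
    forall x, S x -> forall eps, eps > 0 -> exists n, norm (sub x (d n)) < eps.

(* Phi : S -> A is an injective *-homomorphism (values of Phi off S are irrelevant) *)
Definition injective_star_hom {A : CstarAlgebra} (S : A -> Prop) (Phi : A -> A) : Prop :=
  (forall x y, S x -> S y -> Phi (add x y) = add (Phi x) (Phi y)) /\
  (forall a x, S x -> Phi (scal a x) = scal a (Phi x)) /\
  (forall x y, S x -> S y -> Phi (mul x y) = mul (Phi x) (Phi y)) /\
  (forall x, S x -> Phi (star x) = star (Phi x)) /\
  (forall x y, S x -> S y -> Phi x = Phi y -> x = y).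

Definition approx_inner {A : CstarAlgebra} (e : A) (S : A -> Prop) (Phi : A -> A) : Prop :=
  forall eps, eps > 0 -> forall F : list A, (forall a, In a F -> S a) ->
    exists u : A, unitary e u /\
      forall a, In a F -> norm (sub (Phi a) (mul (mul u a) (star u))) < eps.

Inductive spoly (A : CstarAlgebra) : Type :=
| PVar : nat -> spoly A
| PCst : A -> spoly A
| PAdd : spoly A -> spoly A -> spoly A
| PScal : Cpx -> spoly A -> spoly A
| PMul : spoly A -> spoly A -> spoly A
| PStar : spoly A -> spoly A.

Fixpoint peval {A : CstarAlgebra} (b : nat -> A) (P : spoly A) : A :=
  match P with
  | PVar _ k => b k
  | PCst _ a => a
  | PAdd _ p q => add (peval b p) (peval b q)
  | PScal _ c p => scal c (peval b p)
  | PMul _ p q => mul (peval b p) (peval b q)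
  | PStar _ p => star (peval b p)
  end.

(* F_eps = { x | dist(x,F) <= eps }, with dist(x,F) = inf_{y in F} |x-y|
   (so dist(x, empty) = +infinity); "inf <= eps" unfolded *)
Definition fatten (F : R -> Prop) (eps : R) : R -> Prop :=
  fun x => forall delta, delta > 0 -> exists y, F y /\ Rabs (x - y) < eps + delta.

Definition in_unit_ball {A : CstarAlgebra} (b : nat -> A) : Prop :=
  forall k, norm (b k) <= 1.

Definition countably_qf_saturated (A : CstarAlgebra) : Prop :=
  forall (P : nat -> spoly A) (K : nat -> R -> Prop),
    (forall n, compact (K n)) ->
    ((exists b : nat -> A, in_unit_ball b /\ forall n, K n (norm (peval b (P n))))
     <->
     (forall m : nat, (m >= 1)%nat ->
        exists b : nat -> A, in_unit_ball b /\
          forall n, (n <= m)%nat -> fatten (K n) (/ INR m) (norm (peval b (P n))))).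

From Pilot Require Import Defs.
From Stdlib Require Import Reals List.
From Stdlib Require Import Lra Psatz Rtopology Lia.
Open Scope R_scope.

(* Fix a dense sequence (d k) of B.  Saturation is applied to the countable
   family of *-polynomial conditions in one variable x
       x* x - e = 0,   x x* - e = 0,   Phi(d k) - x (d k) x* = 0   (k : nat),
   each with target set K = {0}.  Approximate innerness on the finite set
   {d 0, ..., d m} gives, for every m, a unitary satisfying the first m
   conditions up to 1/m; saturation then yields an exact solution u, i.e. a
   unitary with Phi(d k) = u (d k) u* for all k.  Finally a density argument,
   again using approximate innerness and the fact that conjugation by a unitary
   is norm-nonincreasing, extends the identity Phi(b) = u b u* to all of B. *)

(* The scalar -1, used to express subtraction inside *-polynomials. *)
Definition m1 : Cpx := mkC (-1) 0.

Definition conj_by {A : CstarAlgebra} (u a : A) : A := mul (mul u a) (star u).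

Section Elementary.

Variable A : CstarAlgebra.

Lemma add_zero_l (x : A) : add zero x = x.
Proof. rewrite add_comm; apply add_zero. Qed.

Lemma opp_unique (x y : A) : add x y = zero -> y = opp x.
Proof.
  intro Hxy.
  transitivity (add (add (opp x) x) y).
  - rewrite (add_comm _ (opp x) x), add_opp, add_zero_l; reflexivity.
  - rewrite <- add_assoc, Hxy, add_zero; reflexivity.
Qed.

Lemma add_idem_zero (a : A) : add a a = a -> a = zero.
Proof.
  intro Ha. transitivity (add (add a a) (opp a)).
  - rewrite <- add_assoc, add_opp, add_zero; reflexivity.
  - rewrite Ha; apply add_opp.
Qed.

Lemma scal0 (x : A) : scal C0 x = zero.
Proof.
  apply add_idem_zero. rewrite <- scal_addl. f_equal.
  unfold Cadd, C0; simpl; f_equal; ring.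
Qed.

(* The additive inverse is scaling by -1; this lets linearity of the algebra
   operations in the scalar argument be used for subtraction. *)
Lemma opp_scal (x : A) : opp x = scal m1 x.
Proof.
  symmetry; apply opp_unique.
  rewrite <- (scal_one A x) at 1. rewrite <- scal_addl.
  replace (Cadd Defs.C1 m1) with C0 by (unfold Cadd, C0, Defs.C1, m1; simpl; f_equal; ring).
  apply scal0.
Qed.

Lemma opp_opp (x : A) : opp (opp x) = x.
Proof. symmetry. apply opp_unique. rewrite add_comm. apply add_opp. Qed.

Lemma sub_eq0 (x y : A) : sub x y = zero -> x = y.
Proof.
  intro Hxy. apply opp_unique in Hxy.
  rewrite <- (opp_opp x), <- Hxy, opp_opp. reflexivity.
Qed.

Lemma sub_chain (x y z : A) : add (sub x y) (sub y z) = sub x z.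
Proof.
  unfold sub. rewrite <- add_assoc. f_equal.
  rewrite add_assoc, (add_comm _ (opp y) y), add_opp, add_zero_l. reflexivity.
Qed.

Lemma mul_sub_l (u b d : A) : mul u (sub b d) = sub (mul u b) (mul u d).
Proof. unfold sub. rewrite mul_addr, !opp_scal, mul_scalr. reflexivity. Qed.

Lemma mul_sub_r (u b d : A) : mul (sub b d) u = sub (mul b u) (mul d u).
Proof. unfold sub. rewrite mul_addl, !opp_scal, mul_scall. reflexivity. Qed.

Lemma norm_zero : norm (@zero A) = 0.
Proof.
  rewrite <- (scal0 zero), norm_scal.
  unfold Cabs, C0; simpl. replace (0*0+0*0) with 0 by ring. rewrite sqrt_0; ring.
Qed.

Lemma norm_opp (x : A) : norm (opp x) = norm x.
Proof.
  rewrite opp_scal, norm_scal.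
  unfold Cabs, m1; simpl. replace (-1 * -1 + 0*0) with 1 by ring. rewrite sqrt_1; ring.
Qed.

Lemma norm_nonneg (x : A) : 0 <= norm x.
Proof.
  pose proof (norm_triangle A x (opp x)) as Htri.
  rewrite add_opp, norm_zero, norm_opp in Htri. lra.
Qed.

Lemma dist_triangle (x y z : A) :
  norm (sub x z) <= norm (sub x y) + norm (sub y z).
Proof. rewrite <- (sub_chain x y z). apply norm_triangle. Qed.

Lemma dist_sym (x y : A) : norm (sub x y) = norm (sub y x).
Proof.
  assert (Hyx : sub y x = opp (sub x y)).
  { apply opp_unique. rewrite sub_chain. unfold sub. apply add_opp. }
  rewrite Hyx, norm_opp. reflexivity.
Qed.

Lemma dist_arbitrarily_small (x y : A) :
  (forall eps, eps > 0 -> norm (sub x y) < eps) -> x = y.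
Proof.
  intro Hsmall. apply sub_eq0, norm_eq0.
  destruct (Rle_lt_or_eq_dec 0 _ (norm_nonneg (sub x y))) as [Hpos|Hzero]; auto.
  specialize (Hsmall _ Hpos). lra.
Qed.

End Elementary.

Section Unitaries.

Variable A : CstarAlgebra.
Variable e : A.
Hypothesis He : is_unit e.

(* By the C*-identity the unit is self-adjoint of norm at most 1. *)
Lemma unit_norm : norm e <= 1.
Proof.
  assert (Hs : star e = e).
  { assert (H1 : mul (star e) e = star e) by apply (proj2 (He (star e))).
    assert (H2 : star (mul (star e) e) = mul (star e) e).
    { rewrite star_mul, star_invol. reflexivity. }
    rewrite H1, star_invol in H2. congruence. }
  pose proof (norm_cstar A e) as Hc. rewrite Hs, (proj1 (He e)) in Hc.
  pose proof (norm_nonneg A e). nra.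
Qed.

Lemma unitary_norm (u : A) : unitary e u -> norm u <= 1 /\ norm (star u) <= 1.
Proof.
  intros [H1 H2]. pose proof unit_norm.
  pose proof (norm_cstar A u) as Hu. pose proof (norm_cstar A (star u)) as Hus.
  rewrite star_invol in Hus. rewrite H1 in Hu. rewrite H2 in Hus.
  pose proof (norm_nonneg A u). pose proof (norm_nonneg A (star u)).
  split; nra.
Qed.

Lemma conj_by_lipschitz (v a b : A) : unitary e v ->
  norm (sub (conj_by v a) (conj_by v b)) <= norm (sub a b).
Proof.
  intro Hv. destruct (unitary_norm v Hv) as [N1 N2]. unfold conj_by.
  rewrite <- mul_sub_r, <- mul_sub_l.
  pose proof (norm_mul A (mul v (sub a b)) (star v)).
  pose proof (norm_mul A v (sub a b)).
  pose proof (norm_nonneg A v). pose proof (norm_nonneg A (star v)).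
  pose proof (norm_nonneg A (sub a b)). pose proof (norm_nonneg A (mul v (sub a b))).
  nra.
Qed.

End Unitaries.

(* Saturation with all target sets equal to {0}: if a countable family of
   *-polynomials can be made simultaneously small (the first m of them below
   1/m) in the unit ball, then it has an exact common zero in the unit ball. *)
Lemma saturation_common_zero (A : CstarAlgebra) (P : nat -> spoly A) :
  countably_qf_saturated A ->
  (forall m, (m >= 1)%nat -> exists b : nat -> A, in_unit_ball b /\
     forall n, (n <= m)%nat -> norm (peval b (P n)) < / INR m) ->
  exists b : nat -> A, in_unit_ball b /\ forall n, peval b (P n) = zero.
Proof.
  intros Hsat Happrox.
  set (K := fun (_ : nat) (r : R) => 0 <= r <= 0).
  destruct (proj2 (Hsat P K (fun _ => compact_P3 0 0))) as [b [Hb HK]].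
  - intros m Hm. destruct (Happrox m Hm) as [b [Hb Hsmall]].
    exists b. split; [exact Hb|].
    intros n Hn delta Hdelta. exists 0. split; [unfold K; lra|].
    specialize (Hsmall n Hn).
    rewrite Rminus_0_r, Rabs_pos_eq by apply norm_nonneg. lra.
  - exists b. split; [exact Hb|].
    intro n. apply norm_eq0. destruct (HK n); lra.
Qed.

Section ExactOnDenseSequence.

Variable C : CstarAlgebra.
Variable e : C.
Variable Phi : C -> C.
Variable d : nat -> C.

(* The conditions "x is unitary and conjugation by x agrees with Phi at every
   d k", written as a family of *-polynomials in the variable x = x_0. *)
Definition conj_conditions (n : nat) : spoly C :=
  match n with
  | O => PAdd C (PMul C (PStar C (PVar C 0)) (PVar C 0)) (PScal C m1 (PCst C e))
  | S O => PAdd C (PMul C (PVar C 0) (PStar C (PVar C 0))) (PScal C m1 (PCst C e))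
  | S (S k) => PAdd C (PCst C (Phi (d k)))
      (PScal C m1 (PMul C (PMul C (PVar C 0) (PCst C (d k))) (PStar C (PVar C 0))))
  end.

Lemma conj_conditions_eval (b : nat -> C) (n : nat) :
  peval b (conj_conditions n) =
  match n with
  | O => sub (mul (star (b 0%nat)) (b 0%nat)) e
  | S O => sub (mul (b 0%nat) (star (b 0%nat))) e
  | S (S k) => sub (Phi (d k)) (conj_by (b 0%nat) (d k))
  end.
Proof. destruct n as [|[|k]]; simpl; unfold sub; rewrite opp_scal; reflexivity. Qed.

Variable B : C -> Prop.
Hypothesis He : is_unit e.
Hypothesis Hd : forall k, B (d k).
Hypothesis Hai : approx_inner e B Phi.

(* A unitary that is approximately inner on d 0, ..., d m up to 1/m satisfies
   the first m conditions up to 1/m. *)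
Lemma conj_conditions_approx (m : nat) : (m >= 1)%nat ->
  exists b : nat -> C, in_unit_ball b /\
    forall n, (n <= m)%nat -> norm (peval b (conj_conditions n)) < / INR m.
Proof.
  intro Hm.
  assert (Hpos : / INR m > 0) by (apply Rinv_0_lt_compat, lt_0_INR; lia).
  destruct (Hai (/ INR m) Hpos (map d (seq 0 (S m)))) as [v [Hv Hvd]].
  { intros a Ha. apply in_map_iff in Ha. destruct Ha as [k [<- _]]. apply Hd. }
  exists (fun _ => v). split.
  - intro k. apply (unitary_norm C e He v Hv).
  - intros n Hn. rewrite conj_conditions_eval.
    destruct Hv as [Hv1 Hv2].
    destruct n as [|[|k]].
    + rewrite Hv1. unfold sub. rewrite add_opp, norm_zero. lra.
    + rewrite Hv2. unfold sub. rewrite add_opp, norm_zero. lra.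
    + apply Hvd, in_map, in_seq. lia.
Qed.

Lemma inner_on_sequence : countably_qf_saturated C ->
  exists u : C, unitary e u /\ forall k, Phi (d k) = conj_by u (d k).
Proof.
  intro Hsat.
  destruct (saturation_common_zero C conj_conditions Hsat conj_conditions_approx)
    as [b [_ Hzero]].
  exists (b 0%nat).
  pose proof (fun n => eq_trans (eq_sym (conj_conditions_eval b n)) (Hzero n)) as Hdefect.
  split; [split|].
  - apply sub_eq0, (Hdefect 0%nat).
  - apply sub_eq0, (Hdefect 1%nat).
  - intro k. apply sub_eq0, (Hdefect (S (S k))).
Qed.

End ExactOnDenseSequence.

(* For x in B and d n within eps/5 of x, pick a unitary v approximately
   implementing Phi on {x, d n}; then Phi x, v x v*, v (d n) v*, Phi (d n)
   = u (d n) u*, u x u* form a chain of steps each shorter than eps/5. *)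
Lemma inner_extends_by_density (C : CstarAlgebra) (e u : C) (B : C -> Prop)
    (Phi : C -> C) (D : C -> Prop) :
  is_unit e -> unitary e u -> approx_inner e B Phi ->
  (forall y, D y -> B y) ->
  (forall x, B x -> forall eps, eps > 0 -> exists y, D y /\ norm (sub x y) < eps) ->
  (forall y, D y -> Phi y = conj_by u y) ->
  forall x, B x -> Phi x = conj_by u x.
Proof.
  intros He Hu Hai HDB Hdense Hexact x Hx.
  apply dist_arbitrarily_small. intros eps Heps.
  destruct (Hdense x Hx (eps/5)) as [y [Hy Hxy]]; [lra|].
  destruct (Hai (eps/5) ltac:(lra) (x :: y :: nil)) as [v [Hv Hvb]].
  { intros a [<-|[<-|[]]]; auto. }
  assert (Hvx := Hvb x ltac:(simpl; auto)).
  assert (Hvy := Hvb y ltac:(simpl; auto)).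
  rewrite (Hexact y Hy), dist_sym in Hvy.
  pose proof (conj_by_lipschitz C e He v x y Hv) as Hv_xy.
  pose proof (conj_by_lipschitz C e He u y x Hu) as Hu_yx.
  pose proof (dist_triangle C (Phi x) (conj_by v x) (conj_by u x)).
  pose proof (dist_triangle C (conj_by v x) (conj_by v y) (conj_by u x)).
  pose proof (dist_triangle C (conj_by v y) (conj_by u y) (conj_by u x)).
  pose proof (dist_sym C y x). unfold conj_by in *. lra.
Qed.

Theorem mainTheorem16 (C : CstarAlgebra) (e : C) (B : C -> Prop) (Phi : C -> C) :
  is_unit e ->
  countably_qf_saturated C ->
  cstar_subalgebra B ->
  separable_set B ->
  injective_star_hom B Phi ->
  approx_inner e B Phi ->
  exists u : C, unitary e u /\ forall b, B b -> Phi b = mul (mul u b) (star u).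
Proof.
  intros He Hsat _ [d [Hd Hdense]] _ Hai.
  destruct (inner_on_sequence C e Phi d B He Hd Hai Hsat) as [u [Hu Hdu]].
  exists u. split; [exact Hu|].
  apply (inner_extends_by_density C e u B Phi (fun y => exists k, y = d k));
    auto.
  - intros y [k ->]. apply Hd.
  - intros x Hx eps Heps. destruct (Hdense x Hx eps Heps) as [k Hk].
    exists (d k). eauto.
  - intros y [k ->]. apply Hdu.
Qed.
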